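(* Let $U,V\in\mathbb{R}^{3\times3}$ be symmetric positive definite with $U\neq V$, $UV=VU$, and $V=RUR^T$ for some $R\in SO(3)$. Suppose the eigenvalues of $U$ satisfy $\frac1{\sqrt2}<\lambda_1<\lambda_2=1<\lambda_3$, that $U$ and $V$ have a common eigenvector for the eigenvalue $1$, and that $$\lambda_3=\frac{\lambda_1}{\sqrt{2\lambda_1^2-1}}.$$ Then there exist rotations $R_u^{+},R_v^{+},R_u^{-},R_v^{-}\in SO(3)$, nonzero vectors $b^{+},b^{-}\in\mathbb{R}^3$ with $b^{+}\nparallel b^{-}$, and unit vectors $\hat m_u^{\pm},\hat m_v^{\pm}$ such that, for each sign, $$R_u^{\pm}U-I=b^{\pm}\otimes\hat m_u^{\pm},\qquad R_v^{\pm}V-I=b^{\pm}\otimes\hat m_v^{\pm},$$ and hence $R_u^{\pm}U-R_v^{\pm}V=b^{\pm}\otimes(\hat m_u^{\pm}-\hat m_v^{\pm})$. That is, $U$, $V$ and the identity (austenite) form two distinct planar triple clusters in which the three pairwise differences are rank-one with a common (parallel) shear vector.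
   Context: Here $I$ is the identity matrix (representing austenite) and $SO(3)$ the rotation group. *)

From HB Require Import structures.
From mathcomp Require Import all_boot all_order all_algebra.
From mathcomp Require Import reals.
Set Implicit Arguments. Unset Strict Implicit. Unset Printing Implicit Defensive.
Import Order.TTheory GRing.Theory Num.Theory.
Local Open Scope ring_scope.

Definition is_rot (R : realType) (Q : 'M[R]_3) : Prop :=
  Q^T *m Q = 1%:M /\ \det Q = 1.

Definition spd (R : realType) (A : 'M[R]_3) : Prop :=
  A^T = A /\ forall x : 'cV[R]_3, x != 0 -> 0 < (x^T *m A *m x) 0 0.

Definition unit_vec (R : realType) (m : 'rV[R]_3) : Prop :=
  (m *m m^T) 0 0 = 1.

Definition parallel (R : realType) (a b : 'cV[R]_3) : Prop :=
  exists c : R, a = c *: b \/ b = c *: a.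

Definition tens (R : realType) (b : 'cV[R]_3) (m : 'rV[R]_3) : 'M[R]_3 := b *m m.

(* Diagonalize U in an orthonormal frame whose middle vector is the common eigenvector for 1,
   so that U = diag(l1, 1, l3).  In this frame V commutes with U and is orthogonally conjugate
   to it, hence is diagonal with the same diagonal entries; as V <> U, V = diag(l3, 1, l1).
   Put s = sqrt(2 l1^2 - 1), so that l3 = l1 / s.  The rotation about the middle axis with cosine
   (1 + s) / (2 l1) and sine k (1 - s) / (2 l1), k = +1 or -1, satisfies
     R U - I = g (1, 0, k)^T (-s, 0, k),   g = (1 - s) / (2 s),
   and its inverse satisfies R^-1 V - I = g (1, 0, k)^T (1, 0, -k s).  Rescaling by the common
   length sqrt(1 + s^2) of the two normals makes them unit vectors, and the two signs k give
   non-parallel shears. *)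

From HB Require Import structures.
From mathcomp Require Import all_boot all_order all_algebra.
From mathcomp Require Import reals.
From mathcomp Require Import ring lra.
Set Implicit Arguments. Unset Strict Implicit. Unset Printing Implicit Defensive.
Import Order.TTheory GRing.Theory Num.Theory.
Local Open Scope ring_scope.

Definition i0 : 'I_3 := @Ordinal 3 0 isT.
Definition i1 : 'I_3 := @Ordinal 3 1 isT.
Definition i2 : 'I_3 := @Ordinal 3 2 isT.

Lemma ord3_ind (P : 'I_3 -> Prop) : P i0 -> P i1 -> P i2 -> forall i, P i.
Proof.
move=> P0 P1 P2 [[|[|[|//]]] lti].
- by rewrite (_ : Ordinal lti = i0) //; apply: val_inj.
- by rewrite (_ : Ordinal lti = i1) //; apply: val_inj.
- by rewrite (_ : Ordinal lti = i2) //; apply: val_inj.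
Qed.

Lemma big_ord3 (V : nmodType) (F : 'I_3 -> V) : \sum_i F i = F i0 + F i1 + F i2.
Proof.
by rewrite !big_ord_recl big_ord0 addr0 addrA; congr (_ + _ + _); congr F; apply: val_inj.
Qed.

Section ThreeByThree.
Variable R : comRingType.

Definition row3 (x y z : R) : 'rV[R]_3 := \row_(i < 3) [:: x; y; z]`_i.
Definition col3 (x y z : R) : 'cV[R]_3 := \col_(i < 3) [:: x; y; z]`_i.

Lemma mulmx3E m n (A : 'M[R]_(m, 3)) (B : 'M[R]_(3, n)) i j :
  (A *m B) i j = A i i0 * B i0 j + A i i1 * B i1 j + A i i2 * B i2 j.
Proof. by rewrite mxE big_ord3. Qed.

Lemma det_mx33 (A : 'M[R]_3) : \det A =
  A i0 i0 * (A i1 i1 * A i2 i2 - A i1 i2 * A i2 i1)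
  - A i0 i1 * (A i1 i0 * A i2 i2 - A i1 i2 * A i2 i0)
  + A i0 i2 * (A i1 i0 * A i2 i1 - A i1 i1 * A i2 i0).
Proof.
rewrite (expand_det_row _ i0) big_ord3 /cofactor.
rewrite !(expand_det_row _ ord0) !big_ord_recl !big_ord0 /cofactor !det_mx11 !mxE /=.
repeat match goal with |- context [@lift 3 ?x ?y] =>
  first [ rewrite (_ : lift x y = i0); last by apply: val_inj
        | rewrite (_ : lift x y = i1); last by apply: val_inj
        | rewrite (_ : lift x y = i2); last by apply: val_inj ] end.
rewrite /= !expr0 !expr1 ?exprS ?expr0; ring.
Qed.

End ThreeByThree.

Section Dot.
Variables (R : rcfType) (n : nat).
Implicit Types (x y : 'cV[R]_n) (A : 'M[R]_n).

Definition dot x y : R := (x^T *m y) 0 0.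

Lemma dotE x y : dot x y = \sum_i x i 0 * y i 0.
Proof. by rewrite /dot mxE; apply: eq_bigr => i _; rewrite mxE. Qed.

Lemma dotC x y : dot x y = dot y x.
Proof. by rewrite !dotE; apply: eq_bigr => i _; rewrite mulrC. Qed.

Lemma dotZl a x y : dot (a *: x) y = a * dot x y.
Proof. by rewrite /dot linearZ -scalemxAl mxE. Qed.

Lemma dotZr a x y : dot x (a *: y) = a * dot x y.
Proof. by rewrite dotC dotZl dotC. Qed.

Lemma dot_sym_mx A x y : A^T = A -> dot x (A *m y) = dot (A *m x) y.
Proof. by move=> symA; rewrite /dot mulmxA trmx_mul symA. Qed.

Lemma dot_gt0 x : x != 0 -> 0 < dot x x.
Proof.
move=> x_neq0; have sq_ge0 i : 0 <= x i 0 * x i 0 by rewrite -expr2 sqr_ge0.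
rewrite dotE lt_def sumr_ge0 // andbT; apply: contra x_neq0 => /eqP.
move=> /psumr_eq0P x0; apply/eqP/matrixP => i j.
by rewrite (ord1 j) mxE; apply/eqP; rewrite -sqrf_eq0 expr2 x0.
Qed.

Lemma dot_eigenvectors_eq0 A x y a b :
  A^T = A -> A *m x = a *: x -> A *m y = b *: y -> a != b -> dot x y = 0.
Proof.
move=> symA Ax Ay neq_ab; have /eqP := dot_sym_mx x y symA.
rewrite Ax Ay dotZl dotZr -subr_eq0 -mulrBl mulf_eq0 subr_eq0 eq_sym.
by rewrite (negbTE neq_ab) => /eqP.
Qed.

Definition normalize x := (Num.sqrt (dot x x))^-1 *: x.

Lemma normalize_eigen A x a : A *m x = a *: x -> A *m normalize x = a *: normalize x.
Proof. by move=> Ax; rewrite /normalize -scalemxAr Ax !scalerA mulrC. Qed.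

Lemma dot_normalize x y : dot x y = 0 -> dot (normalize x) (normalize y) = 0.
Proof. by move=> xy0; rewrite /normalize dotZl dotZr xy0 !mulr0. Qed.

Lemma dot_normalize_id x : x != 0 -> dot (normalize x) (normalize x) = 1.
Proof.
move=> /dot_gt0 xx_gt0; rewrite /normalize dotZl dotZr mulrA -invfM -expr2.
by rewrite sqr_sqrtr ?ltW // mulVf ?gt_eqF.
Qed.

Lemma sym_eigenvalue_col A a :
  A^T = A -> eigenvalue A a -> exists2 x : 'cV[R]_n, x != 0 & A *m x = a *: x.
Proof.
move=> symA /eigenvalueP [v vA v_neq0]; exists v^T; first by rewrite trmx_eq0.
by rewrite -symA -trmx_mul vA linearZ.
Qed.

End Dot.

Section Conjugation.
Variables (R : comRingType) (n : nat).
Implicit Types (P A B : 'M[R]_n) (x : 'cV[R]_n).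

Lemma conj_mulmx P A B : P^T *m P = 1%:M ->
  (P *m A *m P^T) *m (P *m B *m P^T) = P *m (A *m B) *m P^T.
Proof. by move=> PtP; rewrite -!mulmxA (mulmxA P^T) PtP mul1mx. Qed.

Lemma conj_eigenvector P A x a : P^T *m P = 1%:M -> A *m x = a *: x ->
  (P *m A *m P^T) *m (P *m x) = a *: (P *m x).
Proof. by move=> PtP Ax; rewrite -!mulmxA (mulmxA P^T) PtP mul1mx Ax scalemxAr. Qed.

Lemma orthogonal_mulmx_neq0 P x : P^T *m P = 1%:M -> x != 0 -> P *m x != 0.
Proof.
by move=> PtP; apply: contraNneq => Px0; rewrite -(mul1mx x) -PtP -mulmxA Px0 mulmx0.
Qed.

End Conjugation.

Section Diagonal.
Variables (R : idomainType) (n : nat).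
Implicit Types (d : 'rV[R]_n) (W : 'M[R]_n).

Lemma diag_mx_commute d W : injective (d 0) ->
  diag_mx d *m W = W *m diag_mx d -> W = diag_mx (\row_i W i i).
Proof.
move=> d_inj dW; apply/matrixP => i j; rewrite !mxE.
have [<-|neq_ij] := eqVneq i j; first by rewrite mulr1n.
rewrite mulr0n; move/matrixP/(_ i j)/eqP: dW.
rewrite mul_diag_mx mul_mx_diag !mxE mulrC -subr_eq0 -mulrBr mulf_eq0 subr_eq0.
by case/orP => [/eqP //|/eqP/d_inj eq_ji]; rewrite eq_ji eqxx in neq_ij.
Qed.

Lemma diag_mx_eigenvalue d (z : 'cV[R]_n) a :
  z != 0 -> diag_mx d *m z = a *: z -> exists i, a = d 0 i.
Proof.
move=> z_neq0 dz; have [i zi_neq0] : exists i, z i 0 != 0.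
  apply/existsP; apply: contraNT z_neq0 => /existsPn z0; apply/eqP/matrixP => i j.
  by rewrite (ord1 j) mxE; apply/eqP/negbNE/z0.
exists i; move/matrixP/(_ i 0)/eqP: dz; rewrite mul_diag_mx !mxE.
by rewrite -subr_eq0 -mulrBl mulf_eq0 (negbTE zi_neq0) orbF subr_eq0 eq_sym => /eqP.
Qed.

End Diagonal.

Lemma row3_inj (R : comRingType) (a b c : R) :
  a != b -> b != c -> a != c -> injective ((row3 a b c) 0).
Proof.
move=> ab bc ac; apply: ord3_ind; apply: ord3_ind; rewrite !mxE //= => /eqP;
  by rewrite ?(negbTE ab) ?(negbTE bc) ?(negbTE ac) // eq_sym
    ?(negbTE ab) ?(negbTE bc) ?(negbTE ac).
Qed.

Lemma row3_diag_cases (R : comRingType) (w : 'rV[R]_3) a c i j :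
  w 0 i1 = 1 -> a = w 0 i -> c = w 0 j -> a != 1 -> c != 1 -> a != c ->
  w = row3 a 1 c \/ w = row3 c 1 a.
Proof.
move=> w1 -> ->; elim/ord3_ind: i; elim/ord3_ind: j;
  rewrite ?w1 ?eqxx //= => _ _ _; [left | right];
  by apply/matrixP => i; rewrite (ord1 i); apply: ord3_ind; rewrite !mxE.
Qed.

Section Frame.
Variable R : rcfType.
Implicit Types (u : 'I_3 -> 'cV[R]_3) (A : 'M[R]_3).

Definition frame3 u : 'M[R]_3 := \matrix_(i, j) u j i 0.

Lemma frame3_conjE u A i j : ((frame3 u)^T *m A *m frame3 u) i j = dot (u i) (A *m u j).
Proof. by rewrite !mulmx3E dotE big_ord3 !mulmx3E !mxE; ring. Qed.

Definition orthonormal3 u := forall i j, dot (u i) (u j) = (i == j)%:R.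

Lemma frame3_orthogonal u : orthonormal3 u -> (frame3 u)^T *m frame3 u = 1%:M.
Proof.
by move=> ON; apply/matrixP => i j; rewrite -[(frame3 u)^T]mulmx1 frame3_conjE mul1mx ON mxE.
Qed.

Lemma frame3_diag u A (d : 'rV[R]_3) : orthonormal3 u ->
  (forall j, A *m u j = d 0 j *: u j) -> (frame3 u)^T *m A *m frame3 u = diag_mx d.
Proof.
move=> ON Au; apply/matrixP => i j; rewrite frame3_conjE Au dotZr ON !mxE.
by have [->|] := eqVneq i j; rewrite ?mulr1 ?mulr0.
Qed.

Lemma normalize3_orthonormal (x y z : 'cV[R]_3) :
  x != 0 -> y != 0 -> z != 0 -> dot x y = 0 -> dot y z = 0 -> dot x z = 0 ->
  orthonormal3 (fun i => [:: normalize x; normalize y; normalize z]`_i).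
Proof.
move=> x0 y0 z0 xy yz xz; have yx : dot y x = 0 by rewrite dotC.
have zy : dot z y = 0 by rewrite dotC.
have zx : dot z x = 0 by rewrite dotC.
by apply: ord3_ind; apply: ord3_ind; rewrite /= ?dot_normalize_id ?dot_normalize.
Qed.

End Frame.

Lemma commuting_conjugate_swap (R : rcfType) (U V Q : 'M[R]_3) a c :
  U^T = U -> U != V -> U *m V = V *m U -> Q^T *m Q = 1%:M -> V = Q *m U *m Q^T ->
  eigenvalue U a -> eigenvalue U c -> a != 1 -> c != 1 -> a != c ->
  (exists e : 'cV[R]_3, e != 0 /\ U *m e = e /\ V *m e = e) ->
  exists2 P : 'M[R]_3, P^T *m P = 1%:M &
    U = P *m diag_mx (row3 a 1 c) *m P^T /\ V = P *m diag_mx (row3 c 1 a) *m P^T.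
Proof.
move=> symU neqUV UV QtQ defV /(sym_eigenvalue_col symU) [x x_neq0 Ux]
  /(sym_eigenvalue_col symU) [z z_neq0 Uz] a1 c1 ac [e [e_neq0 [Ue Ve]]].
rewrite -{2}[e]scale1r in Ue; rewrite -{2}[e]scale1r in Ve.
pose u (i : 'I_3) := [:: normalize x; normalize e; normalize z]`_i.
have ON : orthonormal3 u.
  apply: normalize3_orthonormal => //.
  - exact: dot_eigenvectors_eq0 symU Ux Ue a1.
  - by apply: dot_eigenvectors_eq0 symU Ue Uz _; rewrite eq_sym.
  - exact: dot_eigenvectors_eq0 symU Ux Uz ac.
pose P := frame3 u; have PtP : P^T *m P = 1%:M := frame3_orthogonal ON.
have PPt : P *m P^T = 1%:M := mulmx1C PtP.
have PtUP : P^T *m U *m P = diag_mx (row3 a 1 c).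
  by apply: frame3_diag ON _; apply: ord3_ind; rewrite !mxE /=; apply: normalize_eigen.
pose W := P^T *m V *m P.
have W11 : W i1 i1 = 1.
  by rewrite frame3_conjE /= (normalize_eigen Ve) dotZr dot_normalize_id ?mul1r.
have [w defW] : exists w, W = diag_mx w.
  exists (\row_i W i i); apply: (@diag_mx_commute _ _ (row3 a 1 c)).
    by apply: row3_inj; rewrite // eq_sym.
  by rewrite -PtUP /W -!mulmxA !(mulmxA P) PPt !mul1mx (mulmxA U) (mulmxA V) UV.
have eigW l (y : 'cV[R]_3) : y != 0 -> U *m y = l *: y -> exists i, l = w 0 i.
  move=> y_neq0 Uy; pose O := P^T *m Q.
  have OtO : O^T *m O = 1%:M by rewrite trmx_mul trmxK mulmxA -(mulmxA Q^T) PPt mulmx1.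
  apply: (diag_mx_eigenvalue (orthogonal_mulmx_neq0 OtO y_neq0)).
  have WO : W = O *m U *m O^T by rewrite /W /O defV trmx_mul trmxK !mulmxA.
  by rewrite -defW WO (conj_eigenvector OtO Uy).
(* W is diagonal with middle entry 1 and, being conjugate to U, has a and c on its diagonal. *)
have [[i ai] [j cj]] := (eigW a x x_neq0 Ux, eigW c z z_neq0 Uz).
have w1 : w 0 i1 = 1 by rewrite -W11 defW mxE mulr1n.
have conjP A : A = P *m (P^T *m A *m P) *m P^T.
  by rewrite !mulmxA PPt mul1mx -mulmxA PPt mulmx1.
have defU : U = P *m diag_mx (row3 a 1 c) *m P^T by rewrite -PtUP -conjP.
have defVw : V = P *m diag_mx w *m P^T by rewrite -defW -conjP.
exists P => //; split => //; rewrite defVw.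
have [defw|-> //] := row3_diag_cases w1 ai cj a1 c1 ac.
by move: neqUV; rewrite defVw defw -defU eqxx.
Qed.

Section Clusters.
Variable R : realType.
Implicit Types (P S U V : 'M[R]_3) (b : 'cV[R]_3) (m : 'rV[R]_3).

Definition rot2 (co si : R) : 'M[R]_3 :=
  \matrix_(i, j) (nth [::] [:: [:: co; 0; si]; [:: 0; 1; 0]; [:: - si; 0; co]] i)`_j.

Lemma rot2_is_rot co si : co ^+ 2 + si ^+ 2 = 1 -> is_rot (rot2 co si).
Proof.
rewrite !expr2 => cs1; split; last by rewrite det_mx33 !mxE /= -[RHS]cs1; ring.
apply/matrixP; apply: ord3_ind; apply: ord3_ind; rewrite mulmx3E !mxE /=;
  by try ring; rewrite -[RHS]cs1; ring.
Qed.

Lemma is_rot_conj P S : P^T *m P = 1%:M -> is_rot S -> is_rot (P *m S *m P^T).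
Proof.
move=> PtP [StS detS]; split; last by rewrite !det_mulmx detS mulr1 -det_mulmx mulmx1C ?det1.
by rewrite !trmx_mul trmxK -!mulmxA (mulmxA P^T P) PtP mul1mx (mulmxA S^T) StS mul1mx mulmx1C.
Qed.

Lemma unit_vec_conj P m : P^T *m P = 1%:M -> unit_vec m -> unit_vec (m *m P^T).
Proof. by move=> PtP; rewrite /unit_vec trmx_mul trmxK -mulmxA (mulmxA P^T) PtP mul1mx. Qed.

Lemma unit_vec_scale m r : 0 < r -> (m *m m^T) 0 0 = r ^+ 2 -> unit_vec (r^-1 *: m).
Proof.
move=> r_gt0 mm; rewrite /unit_vec linearZ -scalemxAl -scalemxAr scalerA mxE mm.
by rewrite -expr2 exprVn mulVf // expf_neq0 // gt_eqF.
Qed.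

Lemma tens_scale b m r : r != 0 -> tens (r *: b) (r^-1 *: m) = tens b m.
Proof. by move=> r_neq0; rewrite /tens -scalemxAl -scalemxAr scalerA mulfV ?scale1r. Qed.

Definition triple_cluster U V b := exists Ru Rv mu mv,
  [/\ is_rot Ru, is_rot Rv, unit_vec mu & unit_vec mv] /\
  Ru *m U - 1%:M = tens b mu /\ Rv *m V - 1%:M = tens b mv.

Lemma triple_cluster_conj P U V b : P^T *m P = 1%:M ->
  triple_cluster U V b -> triple_cluster (P *m U *m P^T) (P *m V *m P^T) (P *m b).
Proof.
move=> PtP [Ru [Rv [mu [mv [[rotu rotv unitu unitv] [equ eqv]]]]]].
have conj_rank_one S W m : S *m W - 1%:M = tens b m ->
    (P *m S *m P^T) *m (P *m W *m P^T) - 1%:M = tens (P *m b) (m *m P^T).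
  move=> SW; have -> : 1%:M = P *m 1%:M *m P^T by rewrite mulmx1 mulmx1C.
  by rewrite conj_mulmx // -mulmxBl -mulmxBr SW /tens !mulmxA.
exists (P *m Ru *m P^T), (P *m Rv *m P^T), (mu *m P^T), (mv *m P^T).
split; first by split; [exact: is_rot_conj | exact: is_rot_conj
  | exact: unit_vec_conj | exact: unit_vec_conj].
by split; exact: conj_rank_one.
Qed.

Lemma tens_diff A B b m m' : A - 1%:M = tens b m -> B - 1%:M = tens b m' ->
  A - B = tens b (m - m').
Proof.
move=> Ab Bb; have -> : tens b (m - m') = tens b m - tens b m' by exact: mulmxBr.
by rewrite -Ab -Bb opprB addrA subrK.
Qed.

End Clusters.

Lemma twin_parameter_bounds (R : rcfType) (a : R) : (Num.sqrt 2)^-1 < a -> a < 1 ->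
  [/\ 0 < a, 0 < Num.sqrt (2 * a ^+ 2 - 1), Num.sqrt (2 * a ^+ 2 - 1) < 1
    & Num.sqrt (2 * a ^+ 2 - 1) ^+ 2 = 2 * a ^+ 2 - 1].
Proof.
move=> a_gt a_lt1; have w_gt0 : 0 < Num.sqrt 2 :> R by rewrite sqrtr_gt0 ltr0n.
have a_gt0 : 0 < a by apply: lt_trans a_gt; rewrite invr_gt0.
have aw_gt1 : 1 < a * Num.sqrt 2.
  by move: a_gt; rewrite -(ltr_pM2r w_gt0) mulVf // lt0r_neq0.
have d_gt0 : 0 < 2 * a ^+ 2 - 1.
  have : 1 < (a * Num.sqrt 2) ^+ 2 by rewrite expr2; nra.
  by rewrite exprMn sqr_sqrtr ?ler0n // subr_gt0 mulrC.
have s2 := sqr_sqrtr (ltW d_gt0); have s_gt0 := sqrtr_gt0 (2 * a ^+ 2 - 1).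
rewrite d_gt0 in s_gt0; split => //.
by move: s2; set s := Num.sqrt _ => s2; rewrite !expr2 in s2; nra.
Qed.

Section TwinShears.
Variables (R : realType) (a s : R).
Hypotheses (a_gt0 : 0 < a) (s_gt0 : 0 < s) (s_lt1 : s < 1) (sqr_s : s ^+ 2 = 2 * a ^+ 2 - 1).

Let co := (1 + s) / (2 * a).
Let si := (1 - s) / (2 * a).
Let g := (1 - s) / (2 * s).
Let r := Num.sqrt (1 + s ^+ 2).

Definition twin_shear (k : R) : 'cV[R]_3 := r *: col3 g 0 (g * k).

Lemma twin_scale_gt0 : 0 < r * g.
Proof.
rewrite mulr_gt0 ?sqrtr_gt0 ?ltr_wpDr ?sqr_ge0 ?divr_gt0 ?subr_gt0 //.
by rewrite mulr_gt0 ?ltr0n.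
Qed.

Lemma twin_shear_neq0 k : twin_shear k != 0.
Proof.
apply: contraTneq twin_scale_gt0 => /matrixP/(_ i0 0).
by rewrite !mxE /= => ->; rewrite ltxx.
Qed.

(* The only place where the relation between l1 and l3 is needed. *)
Lemma twin_rot_param : co ^+ 2 + si ^+ 2 = 1.
Proof.
have a_neq0 : a != 0 by rewrite gt_eqF.
have -> : co ^+ 2 + si ^+ 2 = (2 + 2 * s ^+ 2) / (4 * a ^+ 2) by rewrite /co /si; field.
by rewrite sqr_s; field.
Qed.

Lemma twin_rank_one k : k = 1 \/ k = -1 ->
  rot2 co (k * si) *m diag_mx (row3 a 1 (a / s)) - 1%:M = col3 g 0 (g * k) *m row3 (- s) 0 k /\
  rot2 co (- (k * si)) *m diag_mx (row3 (a / s) 1 a) - 1%:M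
    = col3 g 0 (g * k) *m row3 1 0 (- (k * s)).
Proof.
have [a_neq0 s_neq0] : a != 0 /\ s != 0 by rewrite !gt_eqF.
case=> ->; split; apply/matrixP; apply: ord3_ind; apply: ord3_ind;
  rewrite !mxE big_ord3 big_ord1 !mxE /= /co /si /g; field;
  by rewrite ?s_neq0 ?a_neq0.
Qed.

Lemma twin_unit_vecs k : k = 1 \/ k = -1 ->
  unit_vec (r^-1 *: row3 (- s) 0 k) /\ unit_vec (r^-1 *: row3 1 0 (- (k * s))).
Proof.
have r_gt0 : 0 < r by rewrite sqrtr_gt0 ltr_wpDr ?sqr_ge0.
have r2 : r ^+ 2 = 1 + s ^+ 2 by rewrite sqr_sqrtr // addr_ge0 ?sqr_ge0.
by case=> ->; split; apply: unit_vec_scale r_gt0 _; rewrite r2 mulmx3E !mxE /=; ring.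
Qed.

Lemma twin_triple_cluster k : k = 1 \/ k = -1 ->
  triple_cluster (diag_mx (row3 a 1 (a / s))) (diag_mx (row3 (a / s) 1 a)) (twin_shear k).
Proof.
move=> k2; have [rkU rkV] := twin_rank_one k2; have [unitU unitV] := twin_unit_vecs k2.
have r_neq0 : r != 0 by rewrite sqrtr_eq0 -ltNge ltr_wpDr ?sqr_ge0.
have rot_co t : t ^+ 2 = si ^+ 2 -> is_rot (rot2 co t).
  by move=> t2; apply: rot2_is_rot; rewrite t2 twin_rot_param.
exists (rot2 co (k * si)), (rot2 co (- (k * si))).
exists (r^-1 *: row3 (- s) 0 k), (r^-1 *: row3 1 0 (- (k * s))).
split; last by rewrite /twin_shear !tens_scale.
by split => //; apply: rot_co; case: k2 => ->; rewrite ?sqrrN ?mulN1r ?sqrrN ?mul1r.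
Qed.

Lemma twin_shears_not_parallel (P : 'M[R]_3) : P^T *m P = 1%:M ->
  ~ parallel (P *m twin_shear 1) (P *m twin_shear (-1)).
Proof.
move=> PtP [l]; have rg_gt0 := twin_scale_gt0.
have P_inj : injective (@mulmx _ 3 3 1 P).
  by move=> x y Pxy; rewrite -(mul1mx x) -PtP -mulmxA Pxy mulmxA PtP mul1mx.
rewrite !scalemxAr; case=> /P_inj/matrixP ts; move: (ts i0 0) (ts i2 0);
  rewrite !mxE /=; nra.
Qed.

End TwinShears.

Theorem mainTheorem3 (R : realType) (U V Q : 'M[R]_3) (l1 l3 : R) :
  spd U -> spd V -> U != V -> U *m V = V *m U ->
  is_rot Q -> V = Q *m U *m Q^T ->
  (forall a : R, eigenvalue U a <-> (a = l1 \/ a = 1 \/ a = l3)) ->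
  (Num.sqrt 2)^-1 < l1 -> l1 < 1 -> 1 < l3 ->
  (exists e : 'cV[R]_3, e != 0 /\ U *m e = e /\ V *m e = e) ->
  l3 = l1 / Num.sqrt (2 * l1 ^+ 2 - 1) ->
  exists (Rup Rvp Rum Rvm : 'M[R]_3) (bp bm : 'cV[R]_3)
         (mup mvp mum mvm : 'rV[R]_3),
    [/\ is_rot Rup, is_rot Rvp, is_rot Rum & is_rot Rvm] /\
    [/\ bp != 0, bm != 0 & ~ parallel bp bm] /\
    [/\ unit_vec mup, unit_vec mvp, unit_vec mum & unit_vec mvm] /\
    [/\ Rup *m U - 1%:M = tens bp mup, Rvp *m V - 1%:M = tens bp mvp,
        Rum *m U - 1%:M = tens bm mum & Rvm *m V - 1%:M = tens bm mvm] /\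
    (Rup *m U - Rvp *m V = tens bp (mup - mvp) /\
     Rum *m U - Rvm *m V = tens bm (mum - mvm)).
Proof.
move=> [symU _] _ neqUV UV [QtQ _] defV eigU l1_gt l1_lt1 l3_gt1 common defl3.
have [l1_gt0 s_gt0 s_lt1 sqr_s] := twin_parameter_bounds l1_gt l1_lt1.
have [l1_neq1 l3_neq1 l13] : [/\ l1 != 1, l3 != 1 & l1 != l3].
  by rewrite lt_eqF // gt_eqF // lt_eqF //; apply: lt_trans l3_gt1.
have [P PtP [defU defV']] := commuting_conjugate_swap symU neqUV UV QtQ defV
  (proj2 (eigU l1) (or_introl erefl)) (proj2 (eigU l3) (or_intror (or_intror erefl)))
  l1_neq1 l3_neq1 l13 common.
set s := Num.sqrt _ in defl3 s_gt0 s_lt1 sqr_s.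
have cluster k : k = 1 \/ k = -1 -> triple_cluster U V (P *m twin_shear s k).
  move=> k2; rewrite defU defV' defl3; apply: triple_cluster_conj PtP _.
  exact: twin_triple_cluster.
have [Rup [Rvp [mup [mvp [[rup rvp uup uvp] [eup evp]]]]]] := cluster 1 (or_introl erefl).
have [Rum [Rvm [mum [mvm [[rum rvm uum uvm] [eum evm]]]]]] := cluster (-1) (or_intror erefl).
exists Rup, Rvp, Rum, Rvm, (P *m twin_shear s 1), (P *m twin_shear s (-1)).
exists mup, mvp, mum, mvm; split; first by split.
split.
  by split; rewrite ?orthogonal_mulmx_neq0 ?twin_shear_neq0 //; apply: twin_shears_not_parallel.
do 2 (split; first by split).
by split; apply: tens_diff.
Qed.
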